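(* For positive integers $x_1,\ldots,x_r$, the complete $r$-partite graph $K_{x_1,x_2,\ldots,x_r}$ satisfies $$\rho(K_{x_1,x_2,\ldots,x_r})=\sum_{i=1}^r \frac{x_i(x_i + 1)}{2}.$$
   Context: All graphs are finite and simple. $K_{x_1,\ldots,x_r}$ is the complete $r$-partite graph with parts of sizes $x_1,\ldots,x_r$. A coloring means a proper vertex coloring; an induced subgraph is rainbow if all its vertices have pairwise different colors. For a graph $H$, $\rho(H)$ is the least number $m$ such that there exists a graph $G$ on $m$ vertices such that every proper vertex coloring of $G$ contains a rainbow induced subgraph isomorphic to $H$. *)

From mathcomp Require Import all_boot.
Set Implicit Arguments. Unset Strict Implicit. Unset Printing Implicit Defensive.

Definition simple_graph (T : finType) (e : rel T) : Prop :=
  symmetric e /\ irreflexive e.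

Definition proper_coloring (T : finType) (e : rel T) (c : T -> nat) : Prop :=
  forall u v, e u v -> c u != c v.

Definition induced_embedding (H : finType) (eH : rel H) (T : finType) (e : rel T)
  (f : H -> T) : Prop :=
  injective f /\ forall u v, e (f u) (f v) = eH u v.

Definition rainbow (H T : finType) (c : T -> nat) (f : H -> T) : Prop :=
  injective (fun v => c (f v)).

Definition rainbow_forcing (H : finType) (eH : rel H) (m : nat) : Prop :=
  exists e : rel 'I_m, simple_graph e /\
    forall c : 'I_m -> nat, proper_coloring e c ->
      exists f : H -> 'I_m, induced_embedding eH e f /\ rainbow c f.

Definition is_rho (H : finType) (eH : rel H) (m : nat) : Prop :=
  rainbow_forcing eH m /\ forall m', m' < m -> ~ rainbow_forcing eH m'.

(* Complete r-partite graph K_{x_1,...,x_r}: vertices are pairs (i, j) with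
   j < x i; two vertices are adjacent iff they lie in different parts. *)
Definition cmp_vertex (r : nat) (x : 'I_r -> nat) : finType :=
  {i : 'I_r & 'I_(x i)}.

Definition cmp_rel (r : nat) (x : 'I_r -> nat) : rel (cmp_vertex x) :=
  fun u v => tag u != tag v.

From mathcomp Require Import all_boot zify.
Set Implicit Arguments. Unset Strict Implicit. Unset Printing Implicit Defensive.

(* Lower bound: colour a graph G on m vertices by taking a maximum independent set
   I as colour class 0 and recursing on G - I. A rainbow induced copy of a complete
   multipartite graph meets I in at most one vertex w, and the part of w is an
   independent set, so it has at most |I| vertices. By induction the weight
   sum_w (|part(w)| + 1) of any rainbow copy is at most 2m; for K_{x_1..x_r}
   that weight is sum_i x_i (x_i + 1).
   Upper bound: replace the j-th vertex of every part by a clique of j copies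
   (j = 1..x_i). In any proper colouring one can pick, part by part and level by
   level, a copy whose colour differs from the copies already picked in its
   part, which gives a rainbow induced K_{x_1..x_r}. *)

Lemma rainbow_forcing_card (H V : finType) (eH : rel H) (eV : rel V) :
  simple_graph eV ->
  (forall c, proper_coloring eV c -> exists f, induced_embedding eH eV f /\ rainbow c f) ->
  rainbow_forcing eH #|V|.
Proof.
move=> [eV_sym eV_irr] forcing.
pose e : rel 'I_#|V| := fun a b => eV (enum_val a) (enum_val b).
exists e; split; first by split => [a b|a]; rewrite /e ?eV_irr // eV_sym.
move=> c cprop.
have [|f [[f_inj f_emb] f_rainbow]] := forcing (fun v => c (enum_rank v)).
  by move=> u v euv; apply: cprop; rewrite /e !enum_rankK.
exists (fun u => enum_rank (f u)); split; first split.
- by move=> u v /enum_rank_inj /f_inj.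
- by move=> u v; rewrite /e !enum_rankK f_emb.
- exact: f_rainbow.
Qed.

Lemma sum_sigT (I : finType) (T_ : I -> finType) (F : {i : I & T_ i} -> nat) :
  \sum_(u : {i : I & T_ i}) F u = \sum_(i : I) \sum_(j : T_ i) F (Tagged T_ j).
Proof. by rewrite (sig_big_dep _ _ (fun i j => F (Tagged T_ j))); apply: eq_bigr => -[]. Qed.

Lemma sum_ord_succ n : \sum_(j < n) j.+1 = (n * n.+1) %/ 2.
Proof.
have := bin2_sum n.+1; rewrite big_nat_recl // add0n big_mkord => ->.
by rewrite bin2 divn2 mulnC.
Qed.

Lemma exists_avoiding (T : finType) (g : T -> nat) (s : seq nat) :
  injective g -> size s < #|T| -> exists t, g t \notin s.
Proof.
move=> g_inj lt_s_T; case: (pickP [pred t | g t \notin s]) => [t | all_in]; first by exists t.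
have : size (map g (enum T)) <= size s.
  apply: uniq_leq_size; first by rewrite map_inj_uniq ?enum_uniq.
  by move=> _ /mapP [t _ ->]; move: (all_in t) => /= /negbFE.
by rewrite size_map -cardE leqNgt lt_s_T.
Qed.

Section RainbowWeight.
Variables (V : finType) (e : rel V).
Hypothesis e_irr : irreflexive e.
Implicit Types (A I S W : {set V}) (p c : V -> nat) (u v w : V).

Definition independent (S : {set V}) : bool :=
  [forall u in S, forall v in S, ~~ e u v].

Definition induces_multipartite (W : {set V}) (p : V -> nat) : Prop :=
  {in W &, forall u v, e u v = (p u != p v)}.

Definition part_of (W : {set V}) (p : V -> nat) (w : V) : {set V} :=
  [set w' in W | p w' == p w].

Definition part_weight (W : {set V}) (p : V -> nat) : nat :=
  \sum_(w in W) #|part_of W p w|.+1.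

Definition rainbow_weight_bounded (A : {set V}) (c : V -> nat) : Prop :=
  forall (W : {set V}) (p : V -> nat), W \subset A -> {in W &, injective c} ->
    induces_multipartite W p -> part_weight W p <= #|A|.*2.

Definition proper_on (A : {set V}) (c : V -> nat) : Prop :=
  {in A &, forall u v, e u v -> c u != c v}.

Lemma induces_multipartite_subset W' W p :
  W' \subset W -> induces_multipartite W p -> induces_multipartite W' p.
Proof. by move=> W'W Wp u v uW' vW'; apply: Wp; apply: (subsetP W'W). Qed.



Lemma part_weight_setD1 W p w0 : w0 \in W ->
  part_weight W p = part_weight (W :\ w0) p + #|part_of W p w0|.*2.
Proof.
move=> w0W.
have part_setD1 w : #|part_of W p w| = (p w0 == p w) + #|part_of (W :\ w0) p w|.
  rewrite (cardsD1 w0) !inE w0W /= (_ : part_of W p w :\ w0 = part_of (W :\ w0) p w) //.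
  by apply/setP => y; rewrite !inE andbA.
have sum_part : \sum_(w in W :\ w0) (p w0 == p w : nat) = #|part_of (W :\ w0) p w0|.
  rewrite -sum1_card big_mkcond [RHS]big_mkcond /=; apply: eq_bigr => w _.
  by rewrite !inE [p w0 == _]eq_sym; case: (p w == p w0); rewrite ?andbT ?andbF; case: ifP.
rewrite /part_weight (big_setD1 w0 w0W) /=.
under eq_bigr => w _ do rewrite part_setD1 -addnS.
rewrite big_split /= sum_part (part_setD1 w0) eqxx -addnn; lia.
Qed.

Lemma independent_part W p w : induces_multipartite W p -> independent (part_of W p w).
Proof.
move=> Wp; apply/forall_inP => u; rewrite inE => /andP [uW /eqP pu].
by apply/forall_inP => v; rewrite inE => /andP [vW /eqP pv]; rewrite Wp // pu pv eqxx.
Qed.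

Lemma exists_max_independent A : exists2 I : {set V},
  (I \subset A) && independent I & forall S, S \subset A -> independent S -> #|S| <= #|I|.
Proof.
have set0_indep : (set0 \subset A) && independent set0.
  by rewrite sub0set; apply/forall_inP => u; rewrite inE.
have [I II Imax] := @arg_maxnP _ set0
  (fun S : {set V} => (S \subset A) && independent S) (fun S => #|S|) set0_indep.
by exists I => // S SA Sind; apply: Imax; rewrite SA.
Qed.

Definition prepend_color (I : {set V}) (c : V -> nat) (v : V) : nat :=
  if v \in I then 0 else (c v).+1.

Section Prepend.
Variables (A I : {set V}) (c : V -> nat).
Hypotheses (IA : I \subset A) (I_indep : independent I).

Lemma proper_prepend_color :
  proper_on (A :\: I) c -> proper_on A (prepend_color I c).
Proof.
move=> cprop u v uA vA euv; rewrite /prepend_color.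
case uI: (u \in I); case vI: (v \in I) => //.
- by move/forall_inP: I_indep => /(_ u uI) /forall_inP /(_ v vI); rewrite euv.
- by rewrite eqSS cprop // !inE ?uI ?vI.
Qed.

Hypothesis I_max : forall S, S \subset A -> independent S -> #|S| <= #|I|.

(* A rainbow copy meets the colour class [I] at most once; deleting that vertex
   leaves a copy inside [A :\: I], while its own part is independent. *)
Lemma rainbow_weight_prepend :
  rainbow_weight_bounded (A :\: I) c -> rainbow_weight_bounded A (prepend_color I c).
Proof.
move=> cbd W p WA cinj Wp.
have [->|[w1 w1W]] := set_0Vmem W; first by rewrite /part_weight big_set0.
have [w0 w0W W'I] : exists2 w0, w0 \in W & W :\ w0 \subset A :\: I.
  have W'I w0 : (forall w, w \in W -> w \in I -> w = w0) -> W :\ w0 \subset A :\: I.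
    move=> WI; apply/subsetP => w; rewrite !inE => /andP [wn0 wW].
    rewrite (subsetP WA _ wW) andbT; apply: contra wn0 => wI.
    by rewrite (WI w wW wI).
  case: (pickP (mem (W :&: I))) => [w0 | noI]; last first.
    by exists w1 => //; apply: W'I => w wW wI; move: (noI w); rewrite /= inE wW wI.
  rewrite /= inE => /andP [w0W w0I]; exists w0 => //; apply: W'I => w wW wI.
  by apply: cinj => //; rewrite /prepend_color wI w0I.
have W'inj : {in W :\ w0 &, injective c}.
  move=> u v /[dup] /(subsetP W'I) /setDP [_ uI] /setD1P [_ uW].
  move=> /[dup] /(subsetP W'I) /setDP [_ vI] /setD1P [_ vW] cuv.
  by apply: cinj; rewrite // /prepend_color (negbTE uI) (negbTE vI) cuv.
have W'p : induces_multipartite (W :\ w0) p.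
  by apply: induces_multipartite_subset Wp; apply: subsetDl.
have part_small : #|part_of W p w0| <= #|I|.
  apply: I_max; last exact: independent_part.
  by apply/subsetP => w; rewrite inE => /andP [wW _]; apply: (subsetP WA).
have := cbd _ _ W'I W'inj W'p; rewrite (part_weight_setD1 p w0W) cardsDS // => W'bd.
have := subset_leq_card IA; lia.
Qed.

End Prepend.

Lemma exists_coloring_rainbow_weight_bounded A :
  exists c, proper_on A c /\ rainbow_weight_bounded A c.
Proof.
have [n] := ubnP #|A|; elim: n A => // n IH A leAn.
have [->|[a aA]] := set_0Vmem A.
  exists (fun=> 0); split=> [u|W p]; first by rewrite inE.
  by rewrite subset0 => /eqP -> _ _; rewrite /part_weight big_set0.
have [I /andP [IA I_indep] I_max] := exists_max_independent A.
have I_gt0 : 0 < #|I|.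
  rewrite -(cards1 a) I_max ?sub1set //.
  by apply/forall_inP => u /set1P ->; apply/forall_inP => v /set1P ->; rewrite e_irr.
have [c [cprop cbd]] : exists c, proper_on (A :\: I) c /\ rainbow_weight_bounded (A :\: I) c.
  by apply: IH; rewrite cardsDS //; have := subset_leq_card IA; lia.
exists (prepend_color I c); split.
  exact: proper_prepend_color.
exact: rainbow_weight_prepend.
Qed.

End RainbowWeight.

Section CompleteMultipartite.
Variables (r : nat) (x : 'I_r -> nat).

Lemma card_part (i : 'I_r) : #|[set u : cmp_vertex x | tag u == i]| = x i.
Proof.
rewrite -sum1dep_card (eq_bigl (fun u => (tag u == i) && true)) => [|u]; last by rewrite andbT.
rewrite -(sig_big_dep (fun j => j == i) (fun _ _ => true) (fun _ _ => 1)).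
by rewrite big_pred1_eq sum1_card card_ord.
Qed.

Section Copy.
Variables (V : finType) (f : cmp_vertex x -> V) (p : V -> nat).
Hypotheses (f_inj : injective f) (pf : forall u, p (f u) = tag u).

Lemma card_part_image u : #|part_of (f @: setT) p (f u)| = x (tag u).
Proof.
rewrite -card_part -(card_imset _ f_inj); apply: eq_card => y; rewrite !inE.
apply/andP/imsetP => [[/imsetP [v _ ->]] | [v]]; rewrite ?inE !pf => /eqP tvu.
  by exists v; rewrite ?inE ?(val_inj tvu).
by move=> ->; rewrite imset_f ?inE // pf tvu.
Qed.

Lemma part_weight_image : part_weight (f @: setT) p = \sum_(i < r) x i * (x i).+1.
Proof.
rewrite /part_weight big_imset; last by move=> u v _ _ /f_inj.
rewrite (eq_bigl predT) => [|u]; last by rewrite inE.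
under eq_bigr do rewrite card_part_image.
rewrite sum_sigT; apply: eq_bigr => i _.
by rewrite /= big_const_ord iter_addn_0 mulnC.
Qed.

End Copy.

Lemma rainbow_forcing_cmp_ge m :
  rainbow_forcing (@cmp_rel r x) m -> \sum_(i < r) (x i * (x i).+1) %/ 2 <= m.
Proof.
move=> [e [[_ e_irr] forcing]].
have [c [cprop cbd]] := exists_coloring_rainbow_weight_bounded e_irr [set: 'I_m].
have [u v euv|f [[f_inj f_emb] f_rainbow]] := forcing c.
  by apply: cprop; rewrite ?inE.
pose p v := if [pick u | f u == v] is Some u then val (tag u) else 0.
have pf u : p (f u) = tag u.
  by rewrite /p; case: pickP => [u' /eqP /f_inj -> //|/(_ u)]; rewrite eqxx.
have f_rainbow_on : {in f @: setT &, injective c}.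
  by move=> _ _ /imsetP [u _ ->] /imsetP [v _ ->] /f_rainbow ->.
have f_multipartite : induces_multipartite e (f @: setT) p.
  by move=> _ _ /imsetP [u _ ->] /imsetP [v _ ->]; rewrite f_emb !pf.
have := cbd _ p (subsetT _) f_rainbow_on f_multipartite.
rewrite (part_weight_image f_inj pf) cardsT card_ord => weight_le.
rewrite -leq_double -muln2 big_distrl /=; apply: leq_trans weight_le.
by apply: leq_sum => i _; rewrite leq_divM.
Qed.

End CompleteMultipartite.


Section Blowup.
Variables (r : nat) (x : 'I_r -> nat).
Implicit Types u v : cmp_vertex x.

Definition level u : nat := tagged u.

Lemma cmp_vertex_eq u v : tag u = tag v -> level u = level v -> u = v.
Proof. by case: u v => i a [j b] /= eij; subst j; rewrite /level /= => /val_inj ->. Qed.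

Definition copies u : finType := 'I_(level u).+1.

Definition blowup_vertex : finType := {u : cmp_vertex x & copies u}.

Definition blowup_rel : rel blowup_vertex := fun a b =>
  (tag (tag a) != tag (tag b)) || ((tag a == tag b) && (val (tagged a) != val (tagged b))).

Lemma blowup_simple : simple_graph blowup_rel.
Proof.
split=> [a b|a]; rewrite /blowup_rel; last by rewrite !eqxx.
by rewrite eq_sym [tag b == _]eq_sym [val (tagged b) == _]eq_sym.
Qed.

Lemma card_blowup : #|blowup_vertex| = \sum_(i < r) (x i * (x i).+1) %/ 2.
Proof.
rewrite -sum1_card sum_sigT /cmp_vertex sum_sigT; apply: eq_bigr => i _.
by under eq_bigr do rewrite sum1_card card_ord; rewrite sum_ord_succ.
Qed.

Definition lower_vertex u (j : 'I_(level u)) : cmp_vertex x :=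
  Tagged (fun i => 'I_(x i)) (widen_ord (ltnW (ltn_ord (tagged u))) j).

Lemma lower_vertexP u v (lt_vu : level v < level u) :
  tag v = tag u -> v = lower_vertex (Ordinal lt_vu).
Proof. by move=> tvu; apply: cmp_vertex_eq. Qed.

Variables (c : blowup_vertex -> nat) (c_proper : proper_coloring blowup_rel c).

Lemma copies_rainbow u : injective (fun t : copies u => c (Tagged copies t)).
Proof.
move=> t t' ctt'; have := @c_proper (Tagged copies t) (Tagged copies t').
rewrite ctt' eqxx /blowup_rel /= !eqxx /=.
by case: (eqVneq (val t) (val t')) => [/val_inj | _ /(_ isT)].
Qed.

Lemma greedy_copies n : exists k : forall u, copies u,
  forall u v, tag u = tag v -> level u < level v < n ->
    c (Tagged copies (k u)) != c (Tagged copies (k v)).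
Proof.
elim: n => [|n [k k_ok]]; first by exists (fun=> ord0) => u v _; rewrite ltn0 andbF.
pose below u := [seq c (Tagged copies (k (lower_vertex j))) | j <- enum 'I_(level u)].
have avoid u : exists t : copies u, c (Tagged copies t) \notin below u.
  apply: exists_avoiding; first exact: copies_rainbow.
  by rewrite size_map size_enum_ord card_ord.
have [k' k'_avoids] := fin_all_exists avoid.
exists (fun u => if level u < n then k u else k' u) => u v tuv /andP [lt_uv lt_vn].
rewrite (leq_trans lt_uv lt_vn).
case: ltnP => [lt_vn'|le_nv]; first by rewrite k_ok // lt_uv.
apply: contraNN (k'_avoids v) => /eqP <-; rewrite (lower_vertexP lt_uv tuv).
by apply: map_f; rewrite mem_enum.
Qed.

Lemma blowup_forcing :
  exists f, induced_embedding (@cmp_rel r x) blowup_rel f /\ rainbow c f.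
Proof.
have [k k_ok] := greedy_copies #|cmp_vertex x|.
have level_lt u : level u < #|cmp_vertex x|.
  by rewrite /level (leq_trans (ltn_ord _)) // -card_part max_card.
exists (fun u => Tagged copies (k u)); split; first split.
- by move=> u v /(congr1 tag).
- move=> u v; rewrite /blowup_rel /cmp_rel /=.
  by case: (eqVneq u v) => [->|_]; rewrite ?eqxx ?orbF.
- move=> u v cuv; case: (eqVneq (tag u) (tag v)) => [tuv|ntuv]; last first.
    have := @c_proper (Tagged copies (k u)) (Tagged copies (k v)).
    by rewrite /blowup_rel /= ntuv cuv eqxx => /(_ isT).
  case: (ltngtP (level u) (level v)) => [lt_uv|lt_vu|]; last exact: cmp_vertex_eq.
  + by move: (k_ok u v tuv); rewrite lt_uv level_lt cuv eqxx => /(_ isT).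
  + by move: (k_ok v u (esym tuv)); rewrite lt_vu level_lt cuv eqxx => /(_ isT).
Qed.

End Blowup.

Unset Implicit Arguments.
Set Strict Implicit.

Theorem corollary2p3 (r : nat) (x : 'I_r -> nat) (xpos : forall i, 0 < x i) :
  is_rho (@cmp_rel r x) (\sum_(i < r) (x i * (x i).+1) %/ 2).
Proof.
split.
  rewrite -card_blowup; apply: rainbow_forcing_card; first exact: blowup_simple.
  exact: blowup_forcing.
by move=> m; rewrite ltnNge => /negP not_ge /rainbow_forcing_cmp_ge.
Qed.
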